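(* Let $G$ and $H$ be graphs, each with at least $2$ vertices. The strong product $G\boxtimes H$ is $1$-perfectly orientable if and only if one of the following holds: (i) every connected component of $G$ is complete and $H$ is $1$-perfectly orientable, or vice versa; (ii) every connected component of $G$ is $2$-complete and every connected component of $H$ is a co-chain graph, or vice versa.
   Context: All graphs are finite and simple. An orientation of a graph $G$ is $1$-perfect if the out-neighborhood of every vertex induces a clique in $G$; $G$ is $1$-perfectly orientable if it admits a $1$-perfect orientation. The strong product $G\boxtimes H$ has vertex set $V(G)\times V(H)$, with distinct $(u,v),(u',v')$ adjacent iff $u'\in N_G[u]$ and $v'\in N_H[v]$ (closed neighborhoods). A graph is $2$-complete if it is the union of two (not necessarily distinct) complete graphs sharing at least one vertex (equivalently, it is obtained from $K_1$ or $P_3$ by repeatedly adding true twins, where adding a true twin to $x$ means adding a new vertex adjacent to $x$ and to all neighbors of $x$). A graph $G$ is a co-chain graph if its vertex set can be partitioned into two cliques $X$ and $Y$ such that the vertices of $X$ can be ordered $x_1,\dots,x_{|X|}$ with $N[x_i]\subseteq N[x_j]$ for all $1\le i<j\le |X|$. *)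

From mathcomp Require Import all_boot.
Set Implicit Arguments. Unset Strict Implicit. Unset Printing Implicit Defensive.

Definition simple_graph (T : finType) (e : rel T) : Prop :=
  symmetric e /\ irreflexive e.

Definition strong_prod (T1 T2 : finType) (e1 : rel T1) (e2 : rel T2) : rel (T1 * T2) :=
  fun p q => [&& p != q, (q.1 == p.1) || e1 p.1 q.1 & (q.2 == p.2) || e2 p.2 q.2].

Definition is_orientation (T : finType) (e : rel T) (o : rel T) : Prop :=
  (forall x y, o x y -> e x y /\ ~~ o y x) /\
  (forall x y, e x y -> o x y || o y x).

Definition one_perfect (T : finType) (e : rel T) (o : rel T) : Prop :=
  is_orientation e o /\
  (forall v x y, o v x -> o v y -> x != y -> e x y).

Definition one_perfectly_orientable (T : finType) (e : rel T) : Prop :=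
  exists o : rel T, one_perfect e o.

Definition component (T : finType) (e : rel T) (x : T) : {set T} :=
  [set y | connect e x y].

Definition complete_on (T : finType) (e : rel T) (C : {set T}) : Prop :=
  forall x y, x \in C -> y \in C -> x != y -> e x y.

(* the subgraph induced by C is 2-complete: union of two (not necessarily distinct)
   complete graphs on vertex sets A, B sharing at least one vertex *)
Definition two_complete_on (T : finType) (e : rel T) (C : {set T}) : Prop :=
  exists A B : {set T},
    [/\ A :|: B = C, A :&: B != set0 &
        forall x y, x \in C -> y \in C -> x != y ->
          (e x y <-> (x \in A /\ y \in A) \/ (x \in B /\ y \in B))].

Definition closed_nbhd_on (T : finType) (e : rel T) (C : {set T}) (x : T) : {set T} :=
  [set y in C | (y == x) || e x y].

Definition cochain_on (T : finType) (e : rel T) (C : {set T}) : Prop :=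
  exists X Y : {set T},
    [/\ X :|: Y = C, [disjoint X & Y], complete_on e X, complete_on e Y &
        exists s : seq T,
          [/\ uniq s, (forall x, (x \in s) = (x \in X)) &
              forall (x0 : T) (i j : nat), i < j -> j < size s ->
                closed_nbhd_on e C (nth x0 s i) \subset closed_nbhd_on e C (nth x0 s j)]].

(* A graph is 1-perfectly orientable as soon as every vertex v can be given a clique K v
   such that each edge uv has v in K u or u in K v. In G ⊠ H such cliques are products of
   cliques: the component of g times the closed out-neighbourhood of h in a 1-perfect
   orientation of H in case (i), and in case (ii) one of the two cliques of the 2-complete
   component of g, times a clique of the co-chain component of h chosen according to the
   side of h.

   Conversely, a 1-perfect orientation of G ⊠ H restricts to each layer {g} ⊠ H. If G has an
   induced path a - b - c, colour h by where (b, h) may send arcs: the clique condition at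
   the vertices (a, w) and (c, w) makes the colour classes of each component of H cliques
   whose neighbourhoods into the other class are nested, so H is a co-chain graph. A
   co-chain graph without an induced P4 or C4 is 2-complete, and induced P4s or C4s in
   both factors would give an induced domino in G ⊠ H, which has no 1-perfect
   orientation. *)

From mathcomp Require Import all_boot.
From Stdlib Require Import Classical.
Set Implicit Arguments. Unset Strict Implicit. Unset Printing Implicit Defensive.

Section CliqueAssignment.
Variables (T : finType) (e : rel T).
Hypotheses (e_sym : symmetric e) (e_irr : irreflexive e).

Lemma opo_of_clique_assignment (K : T -> {set T}) :
  (forall v, complete_on e (K v)) ->
  (forall u v, e u v -> v \in K u \/ u \in K v) ->
  one_perfectly_orientable e.
Proof.
move=> K_clique K_cover.
pose o u v := [&& e u v, v \in K u & (u \notin K v) || (enum_rank u < enum_rank v)].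
exists o; split; first split.
- move=> x y /and3P[exy yKx tie]; split=> //.
  apply/negP => /and3P[_ xKy]; move: tie; rewrite xKy yKx /= => xy yx.
  by have := ltn_trans xy yx; rewrite ltnn.
- move=> x y exy; rewrite /o exy e_sym exy /=.
  have ranks : (enum_rank x < enum_rank y) || (enum_rank y < enum_rank x).
    by rewrite -neq_ltn; apply/eqP => /val_inj/enum_rank_inj xy; move: exy; rewrite xy e_irr.
  case: (K_cover x y exy) => [->|->];
  case: (boolP (x \in K y)) => //= _; case: (boolP (y \in K x)) => //= _;
  rewrite ?orbT //.
- by move=> v x y /and3P[_ xKv _] /and3P[_ yKv _]; apply: (K_clique v).
Qed.

End CliqueAssignment.

Lemma opo_induced (T T' : finType) (e : rel T) (e' : rel T') (f : T' -> T) :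
  injective f -> (forall x y, e (f x) (f y) = e' x y) ->
  one_perfectly_orientable e -> one_perfectly_orientable e'.
Proof.
move=> f_inj fE [o [[o_arc o_tot] o_clique]].
exists (fun x y => o (f x) (f y)); split; first split.
- by move=> x y /o_arc; rewrite fE.
- by move=> x y; rewrite -fE => /o_tot.
- by move=> v x y ox oy xy; rewrite -fE; apply: o_clique ox oy _; rewrite (inj_eq f_inj).
Qed.

Lemma complete_on_adj (T : finType) (e : rel T) (C : {set T}) x y :
  complete_on e C -> x \in C -> y \in C -> (y == x) || e x y.
Proof. by move=> C_clique xC yC; case: eqVneq => //= yx; apply: C_clique; rewrite // eq_sym. Qed.

Section StrongProduct.
Variables (T1 T2 : finType) (e1 : rel T1) (e2 : rel T2).

Lemma strong_prod_sym : symmetric e1 -> symmetric e2 -> symmetric (strong_prod e1 e2).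
Proof.
move=> e1_sym e2_sym p q; rewrite /strong_prod eq_sym.
by rewrite [q.1 == _]eq_sym e1_sym [q.2 == _]eq_sym e2_sym.
Qed.

Lemma strong_prod_irr : irreflexive (strong_prod e1 e2).
Proof. by move=> p; rewrite /strong_prod eqxx. Qed.

Lemma strong_prod_swap p q :
  strong_prod e1 e2 (p.2, p.1) (q.2, q.1) = strong_prod e2 e1 p q.
Proof.
case: p q => [a b] [c d]; rewrite /strong_prod /= !xpair_eqE.
by rewrite [(b == d) && _]andbC; congr (_ && _); rewrite andbC.
Qed.

Lemma strong_prod_layer a x y : irreflexive e2 -> strong_prod e1 e2 (a, x) (a, y) = e2 x y.
Proof.
move=> e2_irr; rewrite /strong_prod /= xpair_eqE eqxx /=.
by case: eqVneq => [->|]; rewrite ?e2_irr.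
Qed.

Lemma strong_prod_clique (A : {set T1}) (B : {set T2}) :
  complete_on e1 A -> complete_on e2 B -> complete_on (strong_prod e1 e2) (setX A B).
Proof.
move=> A_clique B_clique [a b] [a' b']; rewrite !in_setX => /andP[aA bB] /andP[a'A b'B] ab.
rewrite /strong_prod ab /=.
by rewrite (complete_on_adj A_clique) ?(complete_on_adj B_clique).
Qed.

End StrongProduct.

Lemma opo_strong_prodC (T1 T2 : finType) (e1 : rel T1) (e2 : rel T2) :
  one_perfectly_orientable (strong_prod e1 e2) ->
  one_perfectly_orientable (strong_prod e2 e1).
Proof.
apply: (opo_induced (f := fun p => (p.2, p.1))); last exact: strong_prod_swap.
by move=> [? ?] [? ?] [-> ->].
Qed.

Lemma opo_strong_prod_layer (T1 T2 : finType) (e1 : rel T1) (e2 : rel T2) (a : T1) :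
  irreflexive e2 ->
  one_perfectly_orientable (strong_prod e1 e2) -> one_perfectly_orientable e2.
Proof.
move=> e2_irr; apply: (opo_induced (f := pair a)); first by move=> x y [].
by move=> x y; apply: strong_prod_layer.
Qed.

Section Walks.
Variables (T : finType) (e : rel T).

Lemma path_crossing_edge (P : pred T) x p : path e x p -> P x -> ~~ P (last x p) ->
  exists u v, [/\ e u v, P u, ~~ P v & connect e x u].
Proof.
elim: p x => [|y p IH] x /=; first by move=> _ ->.
case/andP=> exy py Px Pl; case: (boolP (P y)) => Py.
- have [u [v [euv Pu Pv yu]]] := IH y py Py Pl.
  by exists u, v; split=> //; apply: connect_trans (connect1 exy) yu.
- by exists x, y.
Qed.

Fixpoint shortcut_free (x : T) (p : seq T) : bool :=
  match p with
  | y :: (z :: _) as p' => [&& x != z, ~~ e x z & shortcut_free y p']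
  | _ => true
  end.

Lemma shortcut_free_behead x y p : shortcut_free x (y :: p) -> shortcut_free y p.
Proof. by case: p => //= z p /and3P[]. Qed.

Lemma shortcut_free_cons x y p : e x y -> path e y p -> shortcut_free y p ->
  exists q, [/\ path e x q, last x q = last y p & shortcut_free x q].
Proof.
elim: p x y => [|z p IH] x y exy /=; first by exists [:: y]; rewrite /= exy.
case/andP=> eyz pz yzp; have zp := shortcut_free_behead yzp.
case: (eqVneq x z) => [->|xz]; first by exists p.
case: (boolP (e x z)) => [exz|nexz]; first exact: IH exz pz zp.
by exists [:: y, z & p]; rewrite /= exy eyz pz xz nexz.
Qed.

Lemma shortcut_free_walk x p : path e x p ->
  exists q, [/\ path e x q, last x q = last x p & shortcut_free x q].
Proof.
elim: p x => [|y p IH] x /=; first by exists [::].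
case/andP=> exy /IH[q [yq <- sq]]; exact: shortcut_free_cons exy yq sq.
Qed.

End Walks.

Section Components.
Variables (T : finType) (e : rel T).
Hypothesis e_sym : symmetric e.

Lemma mem_component x : x \in component e x.
Proof. by rewrite inE connect0. Qed.

Lemma component_eq x y : connect e x y -> component e x = component e y.
Proof.
move=> xy; apply/setP => z; rewrite !inE.
by apply/idP/idP; apply: connect_trans; rewrite // (sym_connect_sym e_sym).
Qed.

Lemma connect_closed_nbr x y : (y == x) || e x y -> connect e x y.
Proof. by case/orP=> [/eqP->|/connect1]. Qed.

Lemma component_adj x y : (y == x) || e x y -> component e x = component e y.
Proof. by move/connect_closed_nbr; apply: component_eq. Qed.

Lemma root_adj x y : (y == x) || e x y -> root e x = root e y.
Proof. by move/connect_closed_nbr; apply/(rootP (sym_connect_sym e_sym)). Qed.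

Lemma component_root x : component e (root e x) = component e x.
Proof. by rewrite (component_eq (connect_root e x)). Qed.

End Components.

Section ColourClasses.
Variables (T : finType) (e : rel T) (col : pred T).
Hypothesis e_sym : symmetric e.
Hypothesis common_nbr_adj : forall w h h', col h = col h' ->
  (h == w) || e w h -> (h' == w) || e w h' -> h != h' -> e h h'.
Hypothesis nested_opposite_nbhds : forall z z', col z = col z' -> e z z' ->
  (forall t, col t != col z -> e z t -> e z' t) \/
  (forall t, col t != col z -> e z' t -> e z t).

Lemma common_nbr_colour w h h' :
  e w h -> e w h' -> h != h' -> ~~ e h h' -> col h != col h'.
Proof.
move=> wh wh' hh' nhh'; apply: contra nhh' => /eqP same.
by apply: (common_nbr_adj (w := w) same); rewrite ?wh ?wh' ?orbT.
Qed.

Lemma monochromatic_edge_chord u z z' t : e u z -> e z z' -> e z' t ->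
  col z = col z' -> col u != col z -> col t != col z -> e u z' || e z t.
Proof.
move=> uz zz' z't same cu ct.
case: (nested_opposite_nbhds same zz') => nested; first by rewrite e_sym (nested u) // e_sym.
by rewrite (nested t) ?orbT.
Qed.

(* Vertices two steps apart on a shortcut-free walk get different colours, so a walk of
   length at least 2 between vertices of the same colour has an inner monochromatic edge
   whose outer neighbours both have the other colour; nesting then yields a shortcut. *)
Lemma shortcut_free_same_colour x p : path e x p -> shortcut_free e x p ->
  col (last x p) = col x -> size p <= 1.
Proof.
case: p => [|p1 [|p2 r]] //= /and3P[e01 e12 pr] /and3P[n02 ne02 sf].
have c02 : col x != col p2 by apply: (common_nbr_colour (w := p1)); rewrite // e_sym.
case: r pr sf => [|p3 r] /=; first by move=> _ _ c20; rewrite c20 eqxx in c02.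
case/andP=> e23 pr /and3P[n13 ne13 sf].
have c13 : col p1 != col p3 by apply: (common_nbr_colour (w := p2)); rewrite // e_sym.
have [c1x|c1x] := eqVneq (col p1) (col x).
- have c23 : col p2 = col p3.
    by move: c02 c13; rewrite c1x; case: (col x); case: (col p2); case: (col p3).
  case: r pr sf => [|p4 r] /=; first by move=> _ _ c30; rewrite c30 -c1x eqxx in c13.
  case/andP=> e34 _ /and3P[n24 ne24 _] _.
  have c24 : col p2 != col p4 by apply: (common_nbr_colour (w := p3)); rewrite // e_sym.
  have c21 : col p1 != col p2 by rewrite c1x.
  have c42 : col p4 != col p2 by rewrite eq_sym.
  case/orP: (monochromatic_edge_chord e12 e23 e34 c23 c21 c42) => chord.
  + by rewrite chord in ne13.
  + by rewrite chord in ne24.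
- have c12 : col p1 = col p2.
    by move: c02 c1x; case: (col x); case: (col p2); case: (col p1).
  have cx1 : col x != col p1 by rewrite eq_sym.
  have c31 : col p3 != col p1 by rewrite eq_sym.
  case/orP: (monochromatic_edge_chord e01 e12 e23 c12 cx1 c31) => chord.
  + by rewrite chord in ne02.
  + by rewrite chord in ne13.
Qed.

Lemma colour_class_adj x x' : connect e x x' -> col x = col x' -> x != x' -> e x x'.
Proof.
case/connectP=> p /shortcut_free_walk[q [pq <- sq]] -> cq.
have := shortcut_free_same_colour pq sq (esym cq).
case: q pq {sq cq} => [|y []] //=; first by rewrite eqxx.
by rewrite andbT => ->.
Qed.

End ColourClasses.

Lemma subset_chain_enum (T U : finType) (S : {set T}) (N : T -> {set U}) :
  {in S &, forall x y, (N x \subset N y) || (N y \subset N x)} ->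
  exists s : seq T, [/\ uniq s, forall x, (x \in s) = (x \in S) &
    forall x0 i j, i < j -> j < size s -> N (nth x0 s i) \subset N (nth x0 s j)].
Proof.
move=> chain; pose r x y := #|N x| <= #|N y|.
have r_trans : transitive r by move=> ? ? ?; apply: leq_trans.
have r_total : total r by move=> ? ?; apply: leq_total.
exists (sort r (enum S)); split; first by rewrite sort_uniq enum_uniq.
  by move=> x; rewrite mem_sort mem_enum.
set s := sort r (enum S) => x0 i j ij js.
have s_in k : k < size s -> nth x0 s k \in S.
  by move=> ks; rewrite -(mem_enum (mem S)) -(mem_sort r) mem_nth.
have card_ij : r (nth x0 s i) (nth x0 s j).
  exact: (sorted_ltn_nth r_trans x0 (sort_sorted r_total (enum S))) (ltn_trans ij js) js ij.
case/orP: (chain _ _ (s_in i (ltn_trans ij js)) (s_in j js)) => // sub_ji.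
by have := eqEcard (N (nth x0 s j)) (N (nth x0 s i)); rewrite sub_ji (card_ij : _ <= _) => /eqP ->.
Qed.

Section CochainOfColouring.
Variables (T : finType) (e : rel T) (col : pred T) (D : {set T}).
Hypothesis same_colour_adj : {in D &, forall u v, col u = col v -> u != v -> e u v}.
Hypothesis nested_nbhds : {in D &, forall z z', col z -> col z' -> e z z' ->
  (forall t, ~~ col t -> e z t -> e z' t) \/ (forall t, ~~ col t -> e z' t -> e z t)}.

Local Notation N := (closed_nbhd_on e D).

Lemma closed_nbhd_subset x x' : x \in D -> x' \in D -> col x -> col x' ->
  (forall t, ~~ col t -> e x t -> e x' t) -> N x \subset N x'.
Proof.
move=> xD x'D cx cx' nested; apply/subsetP => y; rewrite !inE => /andP[yD xy].
rewrite yD /=; case: (eqVneq y x') => //= yx'.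
case: (boolP (col y)) => cy; first by apply: same_colour_adj; rewrite // ?cx' ?cy // eq_sym.
by case/orP: xy => [/eqP yx|]; [rewrite yx cx in cy | apply: nested].
Qed.

Lemma closed_nbhd_chain :
  {in [set x in D | col x] &, forall x x', (N x \subset N x') || (N x' \subset N x)}.
Proof.
move=> x x'; rewrite !inE => /andP[xD cx] /andP[x'D cx'].
case: (eqVneq x x') => [->|xx']; first by rewrite subxx.
have exx' : e x x' by apply: same_colour_adj; rewrite ?cx ?cx'.
case: (nested_nbhds xD x'D cx cx' exx') => nested.
  by rewrite closed_nbhd_subset.
by rewrite (closed_nbhd_subset x'D xD cx' cx nested) orbT.
Qed.

Lemma cochain_of_colouring : cochain_on e D.
Proof.
exists [set x in D | col x], [set x in D | ~~ col x]; split.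
- by apply/setP => x; rewrite !inE -andb_orr orbN andbT.
- by apply/pred0P => x /=; rewrite !inE; case: (col x); rewrite ?andbF.
- move=> x y; rewrite !inE => /andP[xD cx] /andP[yD cy].
  by apply: same_colour_adj; rewrite ?cx ?cy.
- move=> x y; rewrite !inE => /andP[xD cx] /andP[yD cy].
  by apply: same_colour_adj; rewrite // (negbTE cx) (negbTE cy).
- exact: subset_chain_enum closed_nbhd_chain.
Qed.

End CochainOfColouring.

Definition induced_P3 (T : finType) (e : rel T) (a b c : T) :=
  [/\ e a b, e b c, a != c & ~~ e a c].

Lemma induced_P3_neq (T : finType) (e : rel T) a b c :
  irreflexive e -> induced_P3 e a b c -> a != b /\ c != b.
Proof.
move=> e_irr [ab bc _ _]; split; apply/eqP => eqb.
- by move: ab; rewrite eqb e_irr.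
- by move: bc; rewrite eqb e_irr.
Qed.

Section CochainFactor.
Variables (T1 T2 : finType) (e1 : rel T1) (e2 : rel T2).
Hypotheses (e1_sym : symmetric e1) (e1_irr : irreflexive e1).
Hypotheses (e2_sym : symmetric e2) (e2_irr : irreflexive e2).
Variable o : rel (T1 * T2).
Hypothesis o_perfect : one_perfect (strong_prod e1 e2) o.
Variables a b c : T1.
Hypothesis abc : induced_P3 e1 a b c.

Local Notation E := (strong_prod e1 e2).

Let o_tot x y : E x y -> o x y || o y x.
Proof. by case: o_perfect => [[_ tot] _]; apply: tot. Qed.

Let o_clique v x y : o v x -> o v y -> x != y -> E x y.
Proof. by case: o_perfect => _ clique; apply: clique. Qed.

(* As a and c are not adjacent, (b, h) has no out-neighbour in one of the two outer
   layers; the colour of h records which one, see [layer_arc]. *)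
Let col h := [forall w, ~~ o (b, h) (c, w)].

Let layer h := if col h then c else a.

Lemma layer_neq_middle h : layer h != b.
Proof. by case: (induced_P3_neq e1_irr abc) => ab cb; rewrite /layer; case: (col h). Qed.

Lemma layer_arc h w : (h == w) || e2 w h -> o (layer h, w) (b, h).
Proof.
case: abc => ab bc ac nac wh.
have E_hb : E (layer h, w) (b, h).
  rewrite /strong_prod /= xpair_eqE (negbTE (layer_neq_middle h)) wh /= andbT.
  by rewrite /layer; case: (col h); rewrite ?ab ?orbT // e1_sym bc orbT.
case/orP: (o_tot E_hb) => // o_b; exfalso.
move: o_b; rewrite /layer; case: (boolP (col h)) => [/forallP/(_ w)/negP //|].
rewrite negb_forall => /existsP[w0 /negPn o_bc] o_ba.
have := o_clique o_ba o_bc; rewrite xpair_eqE (negbTE ac) => /(_ isT).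
by rewrite /strong_prod /= [c == a]eq_sym (negbTE ac) (negbTE nac) andbF.
Qed.

Lemma layer_same_colour_adj w h h' : col h = col h' ->
  (h == w) || e2 w h -> (h' == w) || e2 w h' -> h != h' -> e2 h h'.
Proof.
move=> same wh wh' hh'; rewrite -(strong_prod_layer e1 b _ _ e2_irr).
have oh' := layer_arc wh'; rewrite /layer -same in oh'.
by apply: o_clique (layer_arc wh) oh' _; rewrite xpair_eqE eqxx.
Qed.

Lemma layer_out_nbr_adj L z z' t : L != b ->
  o (L, z) (L, z') -> o (L, z) (b, t) -> t != z' -> e2 z' t.
Proof.
move=> Lb ozz' ozt tz'; have := o_clique ozz' ozt.
rewrite xpair_eqE (negbTE Lb) => /(_ isT).
by rewrite /strong_prod /= (negbTE tz') => /and3P[].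
Qed.

Lemma layer_nested_nbhds z z' : col z = col z' -> e2 z z' ->
  (forall t, col t != col z -> e2 z t -> e2 z' t) \/
  (forall t, col t != col z -> e2 z' t -> e2 z t).
Proof.
move=> same zz'; pose L := if col z then a else c.
have layer_opp t : col t != col z -> layer t = L.
  by rewrite /layer /L; case: (col t); case: (col z).
have Lb : L != b by case: (induced_P3_neq e1_irr abc) => ab cb; rewrite /L; case: (col z).
have arc_opp t w : col t != col z -> e2 w t -> o (L, w) (b, t).
  by move=> ct wt; rewrite -(layer_opp t ct); apply: layer_arc; rewrite wt orbT.
have E_LL : E (L, z) (L, z') by rewrite strong_prod_layer.
case/orP: (o_tot E_LL) => o_LL; [left|right] => t ct zt.
- apply: (layer_out_nbr_adj Lb o_LL (arc_opp t z ct zt)).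
  by move: ct; apply: contra_neq => ->; rewrite same.
- apply: (layer_out_nbr_adj Lb o_LL (arc_opp t z' ct zt)).
  by move: ct; apply: contra_neq => ->.
Qed.

Lemma cochain_components_of_P3 y : cochain_on e2 (component e2 y).
Proof.
apply: (cochain_of_colouring (col := col)) => [u v|z z' _ _ cz cz' zz'].
- rewrite !inE => yu yv same uv.
  apply: (colour_class_adj e2_sym layer_same_colour_adj layer_nested_nbhds) => //.
  by apply: connect_trans yv; rewrite (sym_connect_sym e2_sym).
- have [nested|nested] := layer_nested_nbhds (etrans cz (esym cz')) zz'; [left|right];
  by move=> t ct; apply: nested; rewrite cz (negbTE ct).
Qed.

End CochainFactor.

Definition induced_P4_or_C4 (T : finType) (e : rel T) (w x y z : T) :=
  [/\ e w x, e x y, e y z, (w != y) && ~~ e w y & (x != z) && ~~ e x z].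

Section TwoComplete.
Variables (T : finType) (e : rel T) (y0 : T) (X Y : {set T}).
Hypothesis e_sym : symmetric e.
Hypotheses (XY_comp : X :|: Y = component e y0) (XY_disj : [disjoint X & Y]).
Hypotheses (X_clique : complete_on e X) (Y_clique : complete_on e Y).
Hypothesis no_P4_C4 : forall w x y z, ~ induced_P4_or_C4 e w x y z.

Local Notation D := (component e y0).

Let U := [set u in D | [forall z in D, (z != u) ==> e u z]].

Let inXY z : z \in D -> (z \in X) || (z \in Y).
Proof. by rewrite -XY_comp inE. Qed.

Let XD : X \subset D. Proof. by rewrite -XY_comp subsetUl. Qed.

Let YD : Y \subset D. Proof. by rewrite -XY_comp subsetUr. Qed.

Lemma universal_adj u z : u \in U -> z \in D -> z != u -> e u z.
Proof. by rewrite inE => /andP[_ /forall_inP univ] zD; apply/implyP/univ. Qed.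

Lemma universal_sub : U \subset D.
Proof. by apply/subsetP => u; rewrite inE => /andP[]. Qed.

Lemma nonuniversal_witness u : u \in D -> u \notin U ->
  exists z, [/\ z \in D, z != u & ~~ e u z].
Proof.
move=> uD; rewrite inE uD negb_forall => /existsP[z].
by rewrite negb_imply negb_imply => /and3P[zD zu nuz]; exists z.
Qed.

Lemma clique_setU_universal S : complete_on e S -> S \subset D -> complete_on e (S :|: U).
Proof.
move=> S_clique SD x y; rewrite !in_setU => xSU ySU xy.
have inD z : (z \in S) || (z \in U) -> z \in D.
  by case/orP=> [/(subsetP SD)|/(subsetP universal_sub)].
case/orP: xSU => [xS|xU]; first case/orP: ySU => [yS|yU].
- exact: S_clique.
- by rewrite e_sym; apply: universal_adj yU (inD x _) xy; rewrite xS.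
- by apply: universal_adj xU (inD y ySU) _; rewrite eq_sym.
Qed.

Lemma cross_edge_universal x y : x \in X -> y \in Y -> e x y -> (x \in U) || (y \in U).
Proof.
move=> xX yY exy; apply/negPn/negP; rewrite negb_or => /andP[xU yU].
have [z [zD zx nxz]] := nonuniversal_witness (subsetP XD x xX) xU.
have [w [wD wy nyw]] := nonuniversal_witness (subsetP YD y yY) yU.
have zY : z \in Y.
  by case/orP: (inXY zD) => // zX; move: nxz; rewrite X_clique // eq_sym.
have wX : w \in X.
  by case/orP: (inXY wD) => // wY; move: nyw; rewrite Y_clique // eq_sym.
apply: (no_P4_C4 (w := w) (x := x) (y := y) (z := z)); split=> //.
- by apply: X_clique => //; apply: contraNneq nyw => ->; rewrite e_sym.
- by apply: Y_clique => //; apply: contraNneq nxz => <-.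
- by rewrite e_sym nyw andbT; apply: contraTneq wX => ->; rewrite (disjointFl XY_disj yY).
- by rewrite nxz andbT eq_sym.
Qed.

Lemma clique_component_universal S : complete_on e S -> D \subset S -> y0 \in U.
Proof.
move=> S_clique DS; rewrite inE mem_component; apply/forall_inP => z zD; apply/implyP => zy0.
by apply: S_clique; rewrite ?(subsetP DS) ?mem_component // eq_sym.
Qed.

Lemma universal_exists : exists u, u \in U.
Proof.
case: (set_0Vmem X) => [X0|[x xX]].
  by exists y0; apply: (clique_component_universal Y_clique); rewrite -XY_comp X0 set0U.
case: (set_0Vmem Y) => [Y0|[y yY]].
  by exists y0; apply: (clique_component_universal X_clique); rewrite -XY_comp Y0 setU0.
have comp_D z : z \in D -> connect e y0 z by rewrite inE.
have xD := subsetP XD x xX.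
have /connectP[p xp yp] : connect e x y.
  by apply: connect_trans (comp_D y (subsetP YD y yY)); rewrite (sym_connect_sym e_sym) comp_D.
have yX : last x p \notin X by rewrite -yp (disjointFl XY_disj yY).
have [u [v [uv uX vX xu]]] := path_crossing_edge (P := fun z => z \in X) xp xX yX.
have vD : v \in D.
  by rewrite inE (connect_trans (comp_D x xD) (connect_trans xu (connect1 uv))).
have vY : v \in Y by case/orP: (inXY vD) => //; rewrite (negbTE vX).
by case/orP: (cross_edge_universal uX vY uv) => [uU|vU]; [exists u|exists v].
Qed.

Lemma two_complete_of_cliques : two_complete_on e D.
Proof.
have [u uU] := universal_exists.
exists (X :|: U), (Y :|: U); split.
- by rewrite setUACA setUid XY_comp; apply/setUidPl/universal_sub.
- by apply/set0Pn; exists u; rewrite in_setI !in_setU uU !orbT.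
move=> x y xD yD xy; split; last first.
  case=> [[xA yA]|[xB yB]].
  - exact: (clique_setU_universal X_clique XD).
  - exact: (clique_setU_universal Y_clique YD).
rewrite !in_setU => exy.
case/orP: (inXY xD) => xX; case/orP: (inXY yD) => yY.
- by left; rewrite xX yY.
- by case/orP: (cross_edge_universal xX yY exy) => ->; [right|left]; rewrite ?xX ?yY ?orbT.
- rewrite e_sym in exy.
  by case/orP: (cross_edge_universal yY xX exy) => ->; [right|left]; rewrite ?xX ?yY ?orbT.
- by right; rewrite xX yY.
Qed.

End TwoComplete.

Lemma two_complete_components_or_P4_C4 (T : finType) (e : rel T) : symmetric e ->
  (forall x, cochain_on e (component e x)) ->
  (forall x, two_complete_on e (component e x)) \/
  exists w x y z, induced_P4_or_C4 e w x y z.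
Proof.
move=> e_sym cochain; case: (classic (exists w x y z, induced_P4_or_C4 e w x y z)) => [|noP4];
  [by right|left] => x.
have [X [Y [XY_comp XY_disj X_clique Y_clique _]]] := cochain x.
apply: (two_complete_of_cliques e_sym XY_comp XY_disj X_clique Y_clique).
by move=> w x' y z P4; apply: noP4; exists w, x', y, z.
Qed.

(* [xy] reads "arc x -> y" on six vertices A, ..., F inducing a domino, i.e. the 4-cycles
   A B D C and C D F E sharing the edge C D: each edge gets an arc, and no vertex has two
   non-adjacent out-neighbours. *)
Lemma domino_not_opo (ab ba ac ca bd db cd dc ce ec df fd ef fe : bool) :
  ab || ba -> ac || ca -> bd || db -> cd || dc -> ce || ec -> df || fd -> ef || fe ->
  ~~ (ab && ac) -> ~~ (ba && bd) -> ~~ (ca && cd) -> ~~ (ca && ce) -> ~~ (cd && ce) ->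
  ~~ (db && dc) -> ~~ (db && df) -> ~~ (dc && df) -> ~~ (ec && ef) -> ~~ (fd && fe) -> False.
Proof.
by move=> /orP[]-> /orP[]-> /orP[]-> /orP[]-> /orP[]-> /orP[]-> /orP[]->; rewrite ?andbT ?andTb.
Qed.

Section Domino.
Variables (T1 T2 : finType) (e1 : rel T1) (e2 : rel T2).
Hypotheses (e1_irr : irreflexive e1) (e2_sym : symmetric e2).

Lemma strong_prod_adj g g' h h' : e1 g g' -> e2 h h' -> strong_prod e1 e2 (g, h) (g', h').
Proof.
move=> gg' hh'; rewrite /strong_prod /= gg' hh' !orbT !andbT xpair_eqE.
by apply/negP => /andP[/eqP eqg _]; rewrite eqg e1_irr in gg'.
Qed.

Lemma strong_prod_nonadj1 g g' h h' : g != g' -> ~~ e1 g g' ->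
  ((g, h) != (g', h')) && ~~ strong_prod e1 e2 (g, h) (g', h').
Proof.
move=> gg' ngg'; rewrite /strong_prod /= xpair_eqE [g' == g]eq_sym.
by rewrite (negbTE gg') (negbTE ngg').
Qed.

Lemma strong_prod_nonadj2 g g' h h' : h != h' -> ~~ e2 h h' ->
  ((g, h) != (g', h')) && ~~ strong_prod e1 e2 (g, h) (g', h').
Proof.
move=> hh' nhh'; rewrite /strong_prod /= xpair_eqE [h' == h]eq_sym.
by rewrite (negbTE hh') (negbTE nhh') !andbF.
Qed.

Lemma no_P4_C4_pair o g0 g1 g2 g3 h0 h1 h2 h3 : one_perfect (strong_prod e1 e2) o ->
  induced_P4_or_C4 e1 g0 g1 g2 g3 -> induced_P4_or_C4 e2 h0 h1 h2 h3 -> False.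
Proof.
move=> [[_ o_tot] o_clique] [e01 e12 e23 /andP[n02 ne02] /andP[n13 ne13]]
  [f01 f12 f23 /andP[m02 me02] /andP[m13 me13]].
pose A := (g0, h1); pose B := (g1, h0); pose C := (g1, h2);
pose D := (g2, h1); pose E := (g2, h3); pose F := (g3, h2).
have out_nonadj v x y : (x != y) && ~~ strong_prod e1 e2 x y -> ~~ (o v x && o v y).
  by case/andP=> xy nxy; apply: contra nxy => /andP[ox oy]; apply: o_clique ox oy xy.
have f10 : e2 h1 h0 by rewrite e2_sym.
have f21 : e2 h2 h1 by rewrite e2_sym.
have f32 : e2 h3 h2 by rewrite e2_sym.
apply: (@domino_not_opo (o A B) (o B A) (o A C) (o C A) (o B D) (o D B) (o C D) (o D C)
   (o C E) (o E C) (o D F) (o F D) (o E F) (o F E));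
  do ?[by apply: o_tot; apply: strong_prod_adj
      |by apply: out_nonadj; apply: strong_prod_nonadj1
      |by apply: out_nonadj; apply: strong_prod_nonadj2].
Qed.

End Domino.

Lemma one_perfect_closed_out_nbhd (T : finType) (e o : rel T) v :
  symmetric e -> one_perfect e o -> complete_on e [set w | (w == v) || o v w].
Proof.
move=> e_sym [[o_arc _] o_clique] x y; rewrite !inE.
case/orP=> [/eqP->|ox]; case/orP=> [/eqP->|oy] xy; rewrite ?eqxx // in xy.
- by case: (o_arc _ _ oy).
- by rewrite e_sym; case: (o_arc _ _ ox).
- exact: o_clique ox oy xy.
Qed.

Lemma opo_strong_prod_complete_components (T1 T2 : finType) (e1 : rel T1) (e2 : rel T2) :
  symmetric e1 -> symmetric e2 -> (forall x, complete_on e1 (component e1 x)) ->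
  one_perfectly_orientable e2 -> one_perfectly_orientable (strong_prod e1 e2).
Proof.
move=> e1_sym e2_sym comp_clique [o o_perfect].
pose K v := setX (component e1 v.1) [set w | (w == v.2) || o v.2 w].
apply: (opo_of_clique_assignment (strong_prod_sym e1_sym e2_sym) (@strong_prod_irr _ _ e1 e2)
  (K := K)) => [v|[g h] [g' h'] /and3P[_ gg' hh']].
  by apply: strong_prod_clique; [exact: comp_clique | exact: one_perfect_closed_out_nbhd].
rewrite !in_setX /= (component_adj e1_sym gg') mem_component -(component_adj e1_sym gg').
rewrite mem_component !inE /=; case/orP: hh' => [->|hh']; first by left.
by case: o_perfect => [[_ o_tot] _]; case/orP: (o_tot _ _ hh') => ->; [left|right]; rewrite orbT.
Qed.

Section CochainCliques.
Variables (T : finType) (e : rel T).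
Hypothesis e_sym : symmetric e.

Definition nested_nbhds_on (X Y : {set T}) := forall x x', x \in X -> x' \in X ->
  (forall t, t \in Y -> e x t -> e x' t) \/ (forall t, t \in Y -> e x' t -> e x t).

Lemma nested_nbhds_onC X Y : nested_nbhds_on X Y -> nested_nbhds_on Y X.
Proof.
move=> nested y y' yY y'Y.
case: (boolP [forall t in X, e y t ==> e y' t]) => [/forall_inP sub|not_sub]; [left|right].
  by move=> t tX; apply/implyP/sub.
have [t1 t1X /andP[yt1 ny't1]] : exists2 t1, t1 \in X & e y t1 && ~~ e y' t1.
  by move: not_sub; rewrite negb_forall_in => /exists_inP[t1 t1X]; rewrite negb_imply; exists t1.
move=> t tX y't; apply: contraT => nyt.
case: (nested t1 t t1X tX) => sub.
- by move: nyt; rewrite e_sym (sub y) // e_sym.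
- by move: ny't1; rewrite e_sym (sub y') // e_sym.
Qed.

Definition cochain_parts (D X Y : {set T}) :=
  [/\ X :|: Y = D, [disjoint X & Y], complete_on e X, complete_on e Y & nested_nbhds_on X Y].

Lemma cochain_partsC D X Y : cochain_parts D X Y -> cochain_parts D Y X.
Proof.
case=> XY_D XY_disj X_clique Y_clique nested; split=> //.
- by rewrite setUC.
- by rewrite disjoint_sym.
- exact: nested_nbhds_onC.
Qed.

Lemma cochain_on_parts D : cochain_on e D -> exists X Y, cochain_parts D X Y.
Proof.
move=> [X [Y [XY_D XY_disj X_clique Y_clique [s [s_uniq s_X s_chain]]]]].
exists X, Y; split=> //.
have later_nbhd x x' : x \in X -> x' \in X -> index x s < index x' s ->
    forall t, t \in Y -> e x t -> e x' t.
  rewrite -!s_X => xs x's lt t tY xt.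
  have := s_chain x _ _ lt; rewrite index_mem x's !nth_index // => /(_ isT).
  move=> /subsetP/(_ t); rewrite !inE -XY_D inE tY orbT xt orbT => /(_ isT).
  case/orP=> // /eqP tx'; move: x's; rewrite s_X -tx'.
  by rewrite (disjointFl XY_disj tY).
move=> x x' xX x'X; case: (ltngtP (index x s) (index x' s)) => lt.
- by left; apply: later_nbhd.
- by right; apply: later_nbhd.
- by left; rewrite -(nth_index x (_ : x \in s)) ?lt ?nth_index ?s_X.
Qed.

Definition cochain_clique (X Y : {set T}) h : {set T} :=
  if h \in X then [set h' | ((h' \in X) && [forall t in Y, e h t ==> e h' t]) ||
                            ((h' \in Y) && e h h')]
  else Y.

Variables (X Y : {set T}).
Hypotheses (XY_disj : [disjoint X & Y]) (X_clique : complete_on e X) (Y_clique : complete_on e Y).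
Hypothesis nested : nested_nbhds_on X Y.

Local Notation K := (cochain_clique X Y).

Lemma cochain_clique_complete h : complete_on e (K h).
Proof.
rewrite /K /cochain_clique; case: (h \in X) => //.
move=> u v; rewrite !inE => /orP[/andP[uX /forall_inP uY]|/andP[uY hu]]
  /orP[/andP[vX /forall_inP vY]|/andP[vY hv]] uv.
- exact: X_clique.
- by apply: (implyP (uY v vY)).
- by rewrite e_sym; apply: (implyP (vY u uY)).
- exact: Y_clique.
Qed.

Lemma mem_cochain_clique_self h : (h \in X) || (h \in Y) -> h \in K h.
Proof.
rewrite /K /cochain_clique; case: (boolP (h \in X)) => //= hX _.
by rewrite inE hX; apply/orP; left; apply/forall_inP => t _; apply/implyP.
Qed.

Lemma mem_cochain_clique_nbr h h' : h' \in Y -> (h' == h) || e h h' -> h' \in K h.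
Proof.
move=> h'Y; rewrite /K /cochain_clique; case: (boolP (h \in X)) => //= hX.
case/orP=> [/eqP hh'|hh']; first by rewrite hh' (disjointFr XY_disj hX) in h'Y.
by rewrite inE h'Y hh' orbT.
Qed.

Lemma cochain_clique_cover h h' : (h \in X) || (h \in Y) -> (h' \in X) || (h' \in Y) ->
  (h' == h) || e h h' -> h' \in K h \/ h \in K h'.
Proof.
move=> hXY h'XY /orP[/eqP->|hh']; first by left; apply: mem_cochain_clique_self.
rewrite /K /cochain_clique.
case: (boolP (h \in X)) => hX; case: (boolP (h' \in X)) => h'X.
- case: (nested hX h'X) => sub; [left|right]; rewrite inE ?hX ?h'X;
  by apply/orP; left; apply/forall_inP => t tY; apply/implyP/sub.
- by left; move: h'XY; rewrite inE (negbTE h'X) /= => ->.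
- by right; move: hXY; rewrite inE (negbTE hX) /= => ->; rewrite e_sym.
- by left; move: h'XY; rewrite (negbTE h'X).
Qed.

End CochainCliques.

Definition two_complete_parts (T : finType) (e : rel T) (C A B : {set T}) :=
  [/\ A :|: B = C, A :&: B != set0 &
      forall x y, x \in C -> y \in C -> x != y ->
        (e x y <-> (x \in A /\ y \in A) \/ (x \in B /\ y \in B))].

Lemma two_complete_parts_cliques (T : finType) (e : rel T) (C A B : {set T}) :
  two_complete_parts e C A B -> complete_on e A /\ complete_on e B.
Proof.
case=> AB_C _ adj; have AC : A \subset C by rewrite -AB_C subsetUl.
have BC : B \subset C by rewrite -AB_C subsetUr.
split=> x y xS yS xy.
- by apply/adj; rewrite ?(subsetP AC) //; left.
- by apply/adj; rewrite ?(subsetP BC) //; right.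
Qed.

Section ProductCliques.
Variables (T1 T2 : finType) (e1 : rel T1) (e2 : rel T2).
Hypotheses (e1_sym : symmetric e1) (e2_sym : symmetric e2).

Local Notation E := (strong_prod e1 e2).

(* The vertices of A :&: B are shared between the A side and the B side according to
   the part of the cochain graph their second coordinate lies in. *)
Definition A_side (A B : {set T1}) (X : {set T2}) (v : T1 * T2) :=
  (v.1 \in A) && ((v.1 \notin B) || (v.2 \in X)).

Definition product_clique A B X Y v : {set T1 * T2} :=
  if A_side A B X v then setX A (cochain_clique e2 X Y v.2)
  else setX B (cochain_clique e2 Y X v.2).

Variables (C A B : {set T1}) (D X Y : {set T2}).
Hypotheses (AB : two_complete_parts e1 C A B) (XY : cochain_parts e2 D X Y).

Local Notation K := (product_clique A B X Y).

Lemma product_clique_complete v : complete_on E (K v).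
Proof.
have [A_clique B_clique] := two_complete_parts_cliques AB.
case: XY => _ XY_disj X_clique Y_clique _.
rewrite /K /product_clique; case: ifP => _; apply: strong_prod_clique => //.
- exact: cochain_clique_complete.
- by apply: cochain_clique_complete; rewrite // disjoint_sym.
Qed.

Let mem_XY h : h \in D -> (h \in X) || (h \in Y).
Proof. by case: XY => <- _ _ _ _; rewrite inE. Qed.

Let mem_AB g : g \in C -> (g \in A) || (g \in B).
Proof. by case: AB => <- _ _; rewrite inE. Qed.

Lemma product_clique_cross g h g' h' : g \in C -> g' \in C -> h' \in D ->
  (g' == g) || e1 g g' -> (h' == h) || e2 h h' ->
  A_side A B X (g, h) -> ~~ A_side A B X (g', h') ->
  (g', h') \in K (g, h) \/ (g, h) \in K (g', h').
Proof.
move=> gC g'C h'D gg' hh' side nside'.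
case: AB => _ _ adj; case: XY => _ XY_disj _ _ _.
rewrite /K /product_clique side (negbTE nside') !in_setX /=.
move: side nside'; rewrite /A_side /= => /andP[gA side].
case: (boolP (g' \in A)) => /= g'A.
- rewrite negb_or negbK => /andP[g'B h'X]; left.
  apply: (mem_cochain_clique_nbr XY_disj) hh'.
  by move: (mem_XY h'D); rewrite (negbTE h'X).
- move=> _; right.
  have g'B : g' \in B by move: (mem_AB g'C); rewrite (negbTE g'A).
  have ng'g : g != g' by apply: contraNneq g'A => <-.
  have e_gg' : e1 g g' by move: gg'; rewrite eq_sym (negbTE ng'g).
  have gB : g \in B.
    case: ((adj g g' gC g'C ng'g).1 e_gg') => [[_ g'A']|[] //].
    by rewrite g'A' in g'A.
  move: side; rewrite gB /= => hX.
  rewrite disjoint_sym in XY_disj; apply: (mem_cochain_clique_nbr XY_disj) => //.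
  by rewrite eq_sym e2_sym.
Qed.

Lemma not_A_side g h : g \in C -> ~~ A_side A B X (g, h) -> g \in B.
Proof.
move=> gC; rewrite /A_side negb_and negb_or negbK /= => /orP[gA|/andP[//]].
by move: (mem_AB gC); rewrite (negbTE gA).
Qed.

Lemma product_clique_cover g h g' h' : g \in C -> g' \in C -> h \in D -> h' \in D ->
  E (g, h) (g', h') -> (g', h') \in K (g, h) \/ (g, h) \in K (g', h').
Proof.
move=> gC g'C hD h'D /and3P[_ gg' hh'].
have g'g : (g == g') || e1 g' g by rewrite eq_sym e1_sym.
have h'h : (h == h') || e2 h' h by rewrite eq_sym e2_sym.
case: (boolP (A_side A B X (g, h))) => side; case: (boolP (A_side A B X (g', h'))) => side'.
- rewrite /K /product_clique side side' !in_setX.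
  move: side side' => /andP[/= -> _] /andP[/= -> _] /=.
  case: XY => _ _ _ _ nested.
  exact: (cochain_clique_cover e2_sym nested (mem_XY hD) (mem_XY h'D) hh').
- exact: product_clique_cross.
- by case: (product_clique_cross g'C gC hD g'g h'h side' side) => ?; [right|left].
- rewrite /K /product_clique (negbTE side) (negbTE side') !in_setX.
  rewrite (not_A_side gC side) (not_A_side g'C side') /=.
  have [_ _ _ _ nested] := cochain_partsC e2_sym XY.
  by apply: (cochain_clique_cover e2_sym nested); rewrite // orbC mem_XY.
Qed.

End ProductCliques.

Lemma opo_strong_prod_two_complete_cochain (T1 T2 : finType) (e1 : rel T1) (e2 : rel T2) :
  symmetric e1 -> symmetric e2 ->
  (forall x, two_complete_on e1 (component e1 x)) ->
  (forall y, cochain_on e2 (component e2 y)) ->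
  one_perfectly_orientable (strong_prod e1 e2).
Proof.
move=> e1_sym e2_sym two_complete cochain.
have /fin_all_exists[AB AB_parts] x :
    exists AB, two_complete_parts e1 (component e1 x) AB.1 AB.2.
  by have [A [B parts]] := two_complete x; exists (A, B).
have /fin_all_exists[XY XY_parts] y :
    exists XY, cochain_parts e2 (component e2 y) XY.1 XY.2.
  by have [X [Y parts]] := cochain_on_parts (cochain y); exists (X, Y).
(* Indexing the chosen parts by [root] makes adjacent vertices use the same parts. *)
pose K v := let: (g, h) := (root e1 v.1, root e2 v.2) in
  product_clique e2 (AB g).1 (AB g).2 (XY h).1 (XY h).2 v.
apply: (opo_of_clique_assignment (strong_prod_sym e1_sym e2_sym) (@strong_prod_irr _ _ e1 e2)
  (K := K)) => [v|[g h] [g' h'] E_gh].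
  exact: (product_clique_complete e2_sym (AB_parts _) (XY_parts _)).
have /and3P[_ gg' hh'] := E_gh.
rewrite /K /= -(root_adj e1_sym gg') -(root_adj e2_sym hh').
apply: (product_clique_cover e1_sym e2_sym (AB_parts _) (XY_parts _)) => //;
  by rewrite ?(component_root e1_sym) ?(component_root e2_sym) ?mem_component //
    ?(component_adj e1_sym gg') ?(component_adj e2_sym hh') mem_component.
Qed.

Lemma complete_components_or_P3 (T : finType) (e : rel T) : symmetric e ->
  (forall x, complete_on e (component e x)) \/ exists a b c, induced_P3 e a b c.
Proof.
move=> e_sym; case: (classic (exists a b c, induced_P3 e a b c)) => [|noP3];
  [by right|left] => x u v; rewrite !inE => xu xv uv; apply: contraT => nuv.
have /connectP[p up vp] : connect e u v.
  by apply: connect_trans xv; rewrite (sym_connect_sym e_sym).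
have Pv : ~~ ((last u p == u) || e u (last u p)) by rewrite -vp negb_or eq_sym uv.
have [s [t [st /orP[/eqP su|us] Pt _]]] :=
  path_crossing_edge (P := fun z => (z == u) || e u z) up (introT orP (or_introl (eqxx u))) Pv.
  by move: Pt; rewrite /= -su st orbT.
move: Pt; rewrite /= negb_or => /andP[tu nut]; exfalso; apply: noP3; exists u, s, t.
by split=> //; rewrite eq_sym.
Qed.

Unset Implicit Arguments.
Theorem theorem22 (T1 T2 : finType) (e1 : rel T1) (e2 : rel T2) :
  simple_graph e1 -> simple_graph e2 ->
  2 <= #|T1| -> 2 <= #|T2| ->
  (one_perfectly_orientable (strong_prod e1 e2) <->
   ((forall x, complete_on e1 (component e1 x)) /\ one_perfectly_orientable e2) \/
   ((forall y, complete_on e2 (component e2 y)) /\ one_perfectly_orientable e1) \/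
   ((forall x, two_complete_on e1 (component e1 x)) /\
    (forall y, cochain_on e2 (component e2 y))) \/
   ((forall y, two_complete_on e2 (component e2 y)) /\
    (forall x, cochain_on e1 (component e1 x)))).
Proof.
move=> [e1_sym e1_irr] [e2_sym e2_irr] T1_big T2_big; split; last first.
  case=> [[]|[[]|[[]|[]]]] => *.
  - exact: opo_strong_prod_complete_components.
  - exact/opo_strong_prodC/opo_strong_prod_complete_components.
  - exact: opo_strong_prod_two_complete_cochain.
  - exact/opo_strong_prodC/opo_strong_prod_two_complete_cochain.
move=> opo12; have opo21 := opo_strong_prodC opo12.
have /card_gt0P[g0 _] : 0 < #|T1| by apply: leq_trans T1_big.
have /card_gt0P[h0 _] : 0 < #|T2| by apply: leq_trans T2_big.
case: (complete_components_or_P3 e1_sym) => [comp1|[a [b [c P3_1]]]].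
  by left; split=> //; apply: opo_strong_prod_layer g0 e2_irr opo12.
case: (complete_components_or_P3 e2_sym) => [comp2|[a' [b' [c' P3_2]]]].
  by right; left; split=> //; apply: opo_strong_prod_layer h0 e1_irr opo21.
have [o o12] := opo12; have [o' o21] := opo21.
have cochain2 := cochain_components_of_P3 e1_sym e1_irr e2_sym e2_irr o12 P3_1.
have cochain1 := cochain_components_of_P3 e2_sym e2_irr e1_sym e1_irr o21 P3_2.
case: (two_complete_components_or_P4_C4 e1_sym cochain1) => [tc1|[w [x [y [z P4_1]]]]].
  by right; right; left.
case: (two_complete_components_or_P4_C4 e2_sym cochain2) => [tc2|[w' [x' [y' [z' P4_2]]]]].
  by do 3 right.
by case: (no_P4_C4_pair e1_irr e2_sym o12 P4_1 P4_2).
Qed.
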